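(* Let $R$ be the set of $\phi\in V$ that are not cohomologous to any locally constant function, i.e. there is no locally constant $\varphi$ and continuous $\psi:\Sigma_{\mathbf A}^+\to\mathbb C$ with $\phi-\varphi=\psi\circ\sigma_{\mathbf A}-\psi$. Then $R$ is residual in $V$: there exist open dense subsets $V_1,V_2,\dots$ of $V$ with $\bigcap_{m}V_m\subset R$.
   Context: Let $N\ge2$, $\mathbf A$ an $N\times N$ zero-one aperiodic matrix, $\Sigma_{\mathbf A}^+=\{\omega\in\{1,\dots,N\}^{\mathbb N\cup\{0\}}:\mathbf A(\omega_m\omega_{m+1})=1\ \forall m\}$ with left shift $\sigma_{\mathbf A}$. $\mathrm{var}_m(\phi)=\sup\{|\phi(\omega)-\phi(\omega')|:\omega_k=\omega'_k,\ 0\le k\le m-1\}$; $V=\{\phi:\Sigma_{\mathbf A}^+\to\mathbb C:\mathrm{var}_m(\phi)^{1/m}\to0\}$ with the topology generated by the norms $\|\phi\|_\theta=\|\phi\|_\infty+[\phi]_\theta$, $\theta\in(0,1)$, $[\phi]_\theta$ the Lipschitz constant w.r.t. $d_\theta(\omega,\omega')=\theta^{\min\{m:\omega_m\ne\omega'_m\}}$. A function is locally constant if $\mathrm{var}_m$ of it vanishes for some $m$. *)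

From Stdlib Require Import Reals Lra Lia List.
From Coquelicot Require Import Coquelicot.
Open Scope R_scope.

(* Alphabet {1,...,N} encoded as nat; A is given by its entries A i j for 1 <= i,j <= N. *)
Definition zero_one (N : nat) (A : nat -> nat -> nat) : Prop :=
  forall i j, (1 <= i <= N)%nat -> (1 <= j <= N)%nat -> A i j = 0%nat \/ A i j = 1%nat.

Fixpoint matpow (N : nat) (A : nat -> nat -> nat) (k : nat) (i j : nat) : nat :=
  match k with
  | O => if Nat.eqb i j then 1%nat else 0%nat
  | S k' => fold_right Nat.add 0%nat (map (fun l => (matpow N A k' i l * A l j)%nat) (seq 1 N))
  end.

Definition aperiodic (N : nat) (A : nat -> nat -> nat) : Prop :=
  exists M, (1 <= M)%nat /\
    forall i j, (1 <= i <= N)%nat -> (1 <= j <= N)%nat -> (0 < matpow N A M i j)%nat.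

Definition inSigma (N : nat) (A : nat -> nat -> nat) (w : nat -> nat) : Prop :=
  (forall m, (1 <= w m <= N)%nat) /\ (forall m, A (w m) (w (S m)) = 1%nat).

Definition Sigma (N : nat) (A : nat -> nat -> nat) : Type := { w : nat -> nat | inSigma N A w }.

Lemma inSigma_shift N A (w : nat -> nat) : inSigma N A w -> inSigma N A (fun m => w (S m)).
Proof. intros [H1 H2]; split; intros m; [apply H1 | apply H2]. Qed.

Definition shift {N A} (w : Sigma N A) : Sigma N A :=
  exist _ (fun m => proj1_sig w (S m)) (inSigma_shift N A _ (proj2_sig w)).

Definition agree {N A} (m : nat) (w w' : Sigma N A) : Prop :=
  forall k, (k < m)%nat -> proj1_sig w k = proj1_sig w' k.

Definition var {N A} (phi : Sigma N A -> C) (m : nat) : Rbar :=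
  Lub_Rbar (fun r => exists w w', agree m w w' /\ r = Cmod (Cminus (phi w) (phi w'))).

(* V : functions with var_m(phi)^(1/m) -> 0, i.e. for every eps > 0,
   eventually var_m(phi) <= eps^m *)
Definition inV {N A} (phi : Sigma N A -> C) : Prop :=
  forall eps, 0 < eps -> exists M, forall m, (M <= m)%nat -> Rbar_le (var phi m) (Finite (eps ^ m)).

Definition locally_constant {N A} (phi : Sigma N A -> C) : Prop :=
  exists m, var phi m = Finite 0.

(* continuity w.r.t. the product topology (cylinder neighbourhoods) *)
Definition continuousS {N A} (psi : Sigma N A -> C) : Prop :=
  forall w eps, 0 < eps -> exists m, forall w', agree m w w' -> Cmod (Cminus (psi w) (psi w')) < eps.

Definition supnorm {N A} (phi : Sigma N A -> C) : Rbar :=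
  Lub_Rbar (fun r => exists w, r = Cmod (phi w)).

(* [phi]_theta : Lipschitz constant for d_theta(w,w') = theta^n, n = first disagreement *)
Definition lipconst {N A} (theta : R) (phi : Sigma N A -> C) : Rbar :=
  Lub_Rbar (fun r => exists w w' n, agree n w w' /\ proj1_sig w n <> proj1_sig w' n /\
                                   r = Cmod (Cminus (phi w) (phi w')) / theta ^ n).

Definition normth {N A} (theta : R) (phi : Sigma N A -> C) : Rbar :=
  Rbar_plus (supnorm phi) (lipconst theta phi).

Definition in_nbhd {N A} (s : list R) (eps : R) (phi psi : Sigma N A -> C) : Prop :=
  inV psi /\ forall theta, In theta s -> Rbar_lt (normth theta (fun w => Cminus (psi w) (phi w))) (Finite eps).

Definition valid_thetas (s : list R) : Prop := forall theta, In theta s -> 0 < theta < 1.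

(* open subset of V in the topology generated by the norms ||.||_theta *)
Definition openV {N A} (U : (Sigma N A -> C) -> Prop) : Prop :=
  (forall phi, U phi -> inV phi) /\
  forall phi, U phi -> exists s eps, valid_thetas s /\ 0 < eps /\
    forall psi, in_nbhd s eps phi psi -> U psi.

Definition denseV {N A} (D : (Sigma N A -> C) -> Prop) : Prop :=
  forall phi, inV phi -> forall s eps, valid_thetas s -> 0 < eps ->
    exists psi, in_nbhd s eps phi psi /\ D psi.

Definition cohom_loc_const {N A} (phi : Sigma N A -> C) : Prop :=
  exists (vphi psi : Sigma N A -> C), locally_constant vphi /\ continuousS psi /\
    forall w, Cminus (phi w) (vphi w) = Cminus (psi (shift w)) (psi w).

Definition Rresid {N A} (phi : Sigma N A -> C) : Prop := inV phi /\ ~ cohom_loc_const phi.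

(* By aperiodicity there are admissible words of a common length M+1 going
   1 -> 1, 1 -> 2 and 2 -> 1.  Concatenating them, for each m we build three periodic points:
   xU and xV of period p = (m+2) M, and xUV of period 2p whose orbit segment of length 2p
   first follows xU and then xV for long stretches, but which is not itself p-periodic.
   The real-linear functional
       L_m(f) = S_{2p} f (xUV) - S_p f (xU) - S_p f (xV)       (S = Birkhoff sum)
   (i)   vanishes on m-local functions (their Birkhoff sums only see length-m windows),
   (ii)  is unchanged by adding coboundaries (the three points are periodic),
   (iii) is bounded by 4 p sup|f|, and
   (iv)  is >= 1 on the indicator of the length-2p cylinder around xUV.
   V_m = { phi in V | L_m(Re phi) <> 0 } is then open by (iii), dense by (iv) (perturb phi
   by a small multiple of that indicator, which is locally constant, hence keeps phi in V
   and has small theta-norms), and by (i)+(ii) no phi in every V_m is cohomologous to a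
   function with var_m = 0 for some m. *)

From Pilot Require Import Defs.
From Stdlib Require Import Reals Lra Lia List FunctionalExtensionality ProofIrrelevance.
From Coquelicot Require Import Coquelicot.
Open Scope R_scope.

Section Birkhoff.
Context {N : nat} {A : nat -> nat -> nat}.

(* sigma^j, iterated on the inside so that sigma^(j+1) x = sigma^j (sigma x) *)
Fixpoint shiftn (j : nat) (x : Sigma N A) : Sigma N A :=
  match j with O => x | S j => shiftn j (shift x) end.

Lemma shiftn_val j x n : proj1_sig (shiftn j x) n = proj1_sig x (j + n)%nat.
Proof. revert x; induction j as [|j IH]; intros x; simpl; [reflexivity|]. now rewrite IH. Qed.

Lemma Sigma_ext (x y : Sigma N A) : (forall n, proj1_sig x n = proj1_sig y n) -> x = y.
Proof.
  destruct x as [x Hx], y as [y Hy]; simpl; intros H.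
  assert (x = y) by (apply functional_extensionality; exact H). subst.
  f_equal; apply proof_irrelevance.
Qed.

Lemma agree_dec n (w w' : Sigma N A) : {agree n w w'} + {~ agree n w w'}.
Proof.
  induction n as [|n [Ha|Hna]].
  - left; intros k Hk; lia.
  - destruct (Nat.eq_dec (proj1_sig w n) (proj1_sig w' n)) as [E|E].
    + left; intros k Hk. destruct (Nat.eq_dec k n); [subst; exact E | apply Ha; lia].
    + right; intros Ha'; apply E, Ha'; lia.
  - right; intros Ha'; apply Hna; intros k Hk; apply Ha'; lia.
Qed.

Lemma first_difference (x y : Sigma N A) k : ~ agree k x y ->
  exists n, agree n x y /\ proj1_sig x n <> proj1_sig y n.
Proof.
  induction k as [|k IH]; intros Hk.
  - exfalso; apply Hk; intros i Hi; lia.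
  - destruct (agree_dec k x y) as [Ha|Hna]; [|exact (IH Hna)].
    exists k; split; [exact Ha|]. intros E; apply Hk.
    intros i Hi. destruct (Nat.eq_dec i k) as [->|]; [exact E | apply Ha; lia].
Qed.

Definition local (m : nat) (f : Sigma N A -> R) : Prop :=
  forall w w', agree m w w' -> f w = f w'.

Fixpoint birkhoff (f : Sigma N A -> R) (p : nat) (x : Sigma N A) : R :=
  match p with O => 0 | S p => f x + birkhoff f p (shift x) end.

Lemma birkhoff_affine f g h t p x : (forall w, h w = f w + t * g w) ->
  birkhoff h p x = birkhoff f p x + t * birkhoff g p x.
Proof. intros E; revert x; induction p as [|p IH]; intros x; simpl; [lra|]. rewrite E, IH; lra. Qed.

Lemma birkhoff_bound f e p x : (forall w, Rabs (f w) <= e) -> Rabs (birkhoff f p x) <= INR p * e.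
Proof.
  intros Hf; revert x; induction p as [|p IH]; intros x; simpl birkhoff.
  - rewrite Rabs_R0; simpl; lra.
  - rewrite S_INR. eapply Rle_trans; [apply Rabs_triang|]. specialize (Hf x). specialize (IH (shift x)). lra.
Qed.

Lemma birkhoff_nonneg f p x : (forall w, 0 <= f w) -> 0 <= birkhoff f p x.
Proof. intros Hf; revert x; induction p as [|p IH]; intros x; simpl; [lra|]. specialize (Hf x); specialize (IH (shift x)); lra. Qed.

Lemma birkhoff_orbit_zero f p x : (forall j, f (shiftn j x) = 0) -> birkhoff f p x = 0.
Proof.
  revert x; induction p as [|p IH]; intros x Hx; simpl; [lra|].
  rewrite (IH (shift x)) by (intros j; exact (Hx (S j))). specialize (Hx O); simpl in Hx; lra.
Qed.

Lemma birkhoff_add f p q x : birkhoff f (p + q) x = birkhoff f p x + birkhoff f q (shiftn p x).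
Proof. revert x; induction p as [|p IH]; intros x; simpl; [lra|]. rewrite IH; lra. Qed.

Lemma birkhoff_coboundary h p x :
  birkhoff (fun w => h (shift w) - h w) p x = h (shiftn p x) - h x.
Proof. revert x; induction p as [|p IH]; intros x; simpl; [lra|]. rewrite IH; lra. Qed.

Lemma birkhoff_cohomologous f g h p x : (forall w, f w - g w = h (shift w) - h w) ->
  shiftn p x = x -> birkhoff f p x = birkhoff g p x.
Proof.
  intros Hfg Hx.
  rewrite (birkhoff_affine g (fun w => h (shift w) - h w) f 1 p x) by (intros w; rewrite <- Hfg; lra).
  rewrite birkhoff_coboundary, Hx; lra.
Qed.

Lemma birkhoff_local f m p x y : local m f -> agree (p + m) x y -> birkhoff f p x = birkhoff f p y.
Proof.
  intros Hf; revert x y; induction p as [|p IH]; intros x y Hxy; simpl; [reflexivity|].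
  rewrite (Hf x y), (IH (shift x) (shift y)); [reflexivity| |].
  - intros k Hk; apply Hxy; simpl; lia.
  - intros k Hk; apply Hxy; simpl; lia.
Qed.

Definition cyl_ind (n : nat) (x w : Sigma N A) : R := if agree_dec n w x then 1 else 0.

Lemma cyl_ind_local n x : local n (cyl_ind n x).
Proof.
  intros w w' Hw. unfold cyl_ind.
  destruct (agree_dec n w x) as [H1|H1], (agree_dec n w' x) as [H2|H2]; try reflexivity; exfalso.
  - apply H2; intros k Hk; rewrite <- (Hw k Hk); apply H1, Hk.
  - apply H1; intros k Hk; rewrite (Hw k Hk); apply H2, Hk.
Qed.

Lemma cyl_ind_bounds n x w : 0 <= cyl_ind n x w <= 1.
Proof. unfold cyl_ind; destruct agree_dec; lra. Qed.

Lemma cyl_ind_center n x : cyl_ind n x x = 1.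
Proof. unfold cyl_ind; destruct agree_dec as [|Hn]; [reflexivity|]. exfalso; apply Hn; intros k _; reflexivity. Qed.

End Birkhoff.

Lemma Lub_le (E : R -> Prop) b : (forall x, E x -> x <= b) -> Rbar_le (Lub_Rbar E) (Finite b).
Proof. intros Hb. apply (proj2 (Lub_Rbar_correct E)). exact Hb. Qed.

Lemma Lub_ge (E : R -> Prop) x : E x -> Rbar_le (Finite x) (Lub_Rbar E).
Proof. intros Hx. apply (proj1 (Lub_Rbar_correct E)), Hx. Qed.

Lemma C_ext (x y : C) : Re x = Re y -> Im x = Im y -> x = y.
Proof. destruct x, y; unfold Re, Im; simpl; intros; subst; reflexivity. Qed.

Section Norms.
Context {N : nat} {A : nat -> nat -> nat}.

Lemma var_zero_local (phi : Sigma N A -> C) m : Defs.var phi m = Finite 0 -> local m (fun w => Re (phi w)).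
Proof.
  intros Hv w w' Ha.
  assert (Hle : Rbar_le (Finite (Cmod (Cminus (phi w) (phi w')))) (Defs.var phi m))
    by (apply Lub_ge; exists w, w'; split; [exact Ha | reflexivity]).
  rewrite Hv in Hle; simpl in Hle.
  pose proof (re_le_Cmod (Cminus (phi w) (phi w'))) as Hre.
  pose proof (Rabs_pos (Re (Cminus (phi w) (phi w')))).
  assert (E : Re (Cminus (phi w) (phi w')) = 0) by (apply Rabs_eq_0; lra).
  unfold Re in *; simpl in E; lra.
Qed.

Lemma var_add_local (phi f : Sigma N A -> C) K m : (K <= m)%nat ->
  (forall w w', agree K w w' -> f w = f w') -> Defs.var (fun w => Cplus (phi w) (f w)) m = Defs.var phi m.
Proof.
  intros HKm Hf. apply Lub_Rbar_eqset.
  intros r; split; intros [w [w' [Ha ->]]]; exists w, w'; split; [exact Ha| |exact Ha|];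
    (assert (E : f w = f w') by (apply Hf; intros k Hk; apply Ha; lia));
    f_equal; apply C_ext; unfold Re, Im; simpl; rewrite E; lra.
Qed.

Lemma inV_add_local (phi f : Sigma N A -> C) K : inV phi ->
  (forall w w', agree K w w' -> f w = f w') -> inV (fun w => Cplus (phi w) (f w)).
Proof.
  intros Hphi Hf eps He. destruct (Hphi eps He) as [M0 HM0]. exists (max M0 K). intros m Hm.
  rewrite (var_add_local phi f K m) by (lia || exact Hf). apply HM0; lia.
Qed.

Lemma normth_local_bound (th t : R) K (f : Sigma N A -> C) : 0 < th < 1 ->
  (forall w, Cmod (f w) <= t) -> (forall w w', agree K w w' -> f w = f w') ->
  Rbar_le (normth th f) (Finite (t + 2 * t / th ^ K)).
Proof.
  intros Hth Hf Hl. apply (Rbar_plus_le_compat _ (Finite t) _ (Finite (2 * t / th ^ K))).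
  - apply Lub_le. intros x [w ->]. apply Hf.
  - apply Lub_le. intros x [w [w' [n [Ha [_ ->]]]]].
    pose proof (pow_lt th n ltac:(lra)) as Hn.
    assert (Hdiff : Cmod (Cminus (f w) (f w')) <= 2 * t).
    { unfold Cminus. eapply Rle_trans; [apply Cmod_triangle|]. rewrite Cmod_opp.
      pose proof (Hf w); pose proof (Hf w'); lra. }
    destruct (Nat.le_gt_cases K n) as [HKn|HKn].
    + rewrite (Hl w w') by (intros k Hk; apply Ha; lia).
      replace (Cminus (f w') (f w')) with (RtoC 0) by (apply C_ext; unfold Re, Im; simpl; lra).
      rewrite Cmod_0, Rdiv_0_l. apply Rdiv_le_0_compat; [|apply pow_lt; lra].
      pose proof (Cmod_ge_0 (f w)) as H0; pose proof (Hf w); lra.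
    + assert (Hpow : th ^ K <= th ^ n).
      { replace K with (n + (K - n))%nat by lia. rewrite pow_add.
        pose proof (pow_incr th 1 (K - n) ltac:(lra)) as H1. rewrite pow1 in H1.
        pose proof (pow_lt th (K - n) ltac:(lra)). nra. }
      unfold Rdiv. apply Rle_trans with (2 * t * / th ^ n).
      * apply Rmult_le_compat_r; [left; apply Rinv_0_lt_compat|]; assumption.
      * apply Rmult_le_compat_l; [pose proof (Cmod_ge_0 (Cminus (f w) (f w'))); lra|].
        apply Rinv_le_contravar; [apply pow_lt; lra | exact Hpow].
Qed.

Lemma sup_lt_of_normth_lt (th e : R) (f : Sigma N A -> C) : 0 < th ->
  (exists (w w' : Sigma N A) n, agree n w w' /\ proj1_sig w n <> proj1_sig w' n) ->
  Rbar_lt (normth th f) (Finite e) -> forall w, Cmod (f w) < e.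
Proof.
  intros Hth [w1 [w2 [n [Ha Hn]]]] Hlt w.
  assert (H0 : Rbar_le (Finite 0) (lipconst th f)).
  { eapply Rbar_le_trans; [|apply Lub_ge; exists w1, w2, n; split; [exact Ha|split; [exact Hn|reflexivity]]].
    apply Rdiv_le_0_compat; [apply Cmod_ge_0 | apply pow_lt; exact Hth]. }
  assert (H1 : Rbar_le (Finite (Cmod (f w))) (supnorm f)) by (apply Lub_ge; exists w; reflexivity).
  unfold normth in Hlt.
  destruct (supnorm f) as [s| |], (lipconst th f) as [l| |]; simpl in *; try lra; tauto.
Qed.

Lemma perturb_in_nbhd (s : list R) eps K t (phi : Sigma N A -> C) (g : Sigma N A -> R) :
  valid_thetas s -> inV phi -> local K g -> (forall w, 0 <= g w <= 1) -> 0 < t ->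
  (forall th, In th s -> t + 2 * t / th ^ K < eps) ->
  in_nbhd s eps phi (fun w => Cplus (phi w) (RtoC (t * g w))).
Proof.
  intros Hs Hphi Hg Hg01 Ht Hsmall. split.
  - apply (inV_add_local phi _ K Hphi). intros w w' Hw. now rewrite (Hg w w' Hw).
  - assert (Ediff : (fun w => Cminus (Cplus (phi w) (RtoC (t * g w))) (phi w)) = (fun w => RtoC (t * g w))).
    { apply functional_extensionality; intros w. apply C_ext; unfold Re, Im; simpl; lra. }
    intros th Hth. cbv beta. rewrite Ediff.
    eapply Rbar_le_lt_trans; [apply (normth_local_bound th t K); [apply Hs, Hth | |] | apply Hsmall, Hth].
    + intros w. rewrite Cmod_R, Rabs_pos_eq; specialize (Hg01 w); nra.
    + intros w w' Hw. rewrite (Hg w w' Hw). reflexivity.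
Qed.

End Norms.

Lemma uniform_small_scale (s : list R) K eps : valid_thetas s -> 0 < eps ->
  exists t0, 0 < t0 /\ forall th, In th s -> forall t, 0 < t <= t0 -> t + 2 * t / th ^ K < eps.
Proof.
  induction s as [|th s IH]; intros Hs He.
  - exists 1; split; [lra|]. intros th [].
  - destruct IH as [t1 [Ht1 H1]]; [intros x Hx; apply Hs; right; exact Hx | exact He |].
    assert (Hth : 0 < th < 1) by (apply Hs; left; reflexivity).
    pose proof (pow_lt th K ltac:(lra)) as Hp.
    set (c := 1 + 2 / th ^ K).
    assert (Hc : 1 <= c) by (unfold c; pose proof (Rdiv_le_0_compat 2 _ ltac:(lra) Hp); lra).
    exists (Rmin t1 (eps / (2 * c))). split.
    + apply Rmin_glb_lt; [exact Ht1 | apply Rdiv_lt_0_compat; lra].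
    + intros th' [<-|Hin] t Ht.
      * replace (t + 2 * t / th ^ K) with (t * c) by (unfold c; field; lra).
        assert (t <= eps / (2 * c)) by (eapply Rle_trans; [apply Ht|apply Rmin_r]).
        apply Rle_lt_trans with (eps / (2 * c) * c); [apply Rmult_le_compat_r; lra|].
        replace (eps / (2 * c) * c) with (eps / 2) by (field; lra). lra.
      * apply H1; [exact Hin|]. split; [lra|]. eapply Rle_trans; [apply Ht|apply Rmin_l].
Qed.

Section Bridges.
Local Open Scope nat_scope.

Lemma sum_list_pos (f : nat -> nat) l :
  0 < fold_right Nat.add 0 (map f l) -> exists x, In x l /\ 0 < f x.
Proof.
  induction l as [|a l IH]; simpl; intros H; [lia|].
  destruct (Nat.eq_dec (f a) 0) as [E|E].
  - rewrite E in H. destruct (IH H) as [x [Hx Hf]]. exists x; auto.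
  - exists a; split; [left; reflexivity | lia].
Qed.

Lemma admissible_word N A (H01 : zero_one N A) k i j :
  1 <= i <= N -> 1 <= j <= N -> 0 < matpow N A k i j ->
  exists W : nat -> nat, W O = i /\ W k = j /\
    (forall l, l < k -> A (W l) (W (S l)) = 1) /\ (forall l, l <= k -> 1 <= W l <= N).
Proof.
  revert j; induction k as [|k IH]; intros j Hi Hj Hp.
  - simpl in Hp. destruct (Nat.eqb_spec i j) as [<-|]; [|lia].
    exists (fun _ => i). repeat split; intros; lia.
  - cbn [matpow] in Hp. destruct (sum_list_pos _ _ Hp) as [l [Hl Hlp]]. apply in_seq in Hl.
    assert (Hlr : 1 <= l <= N) by lia.
    destruct (H01 l j Hlr Hj) as [E|E]; rewrite E in Hlp; [lia|].
    destruct (IH l Hi Hlr ltac:(lia)) as [W [HW0 [HWk [HWa HWr]]]].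
    exists (fun n => if Nat.eqb n (S k) then j else W n). split; [|split; [|split]].
    + exact HW0.
    + rewrite Nat.eqb_refl; reflexivity.
    + intros l' Hl'. destruct (Nat.eqb_spec l' (S k)); [lia|].
      destruct (Nat.eqb_spec (S l') (S k)) as [E'|]; [|apply HWa; lia].
      replace l' with k by lia. rewrite HWk; exact E.
    + intros l' Hl'. destruct (Nat.eqb_spec l' (S k)); [lia|]. apply HWr; lia.
Qed.

Definition bridges (N : nat) (A : nat -> nat -> nat) (M : nat) (P : nat -> nat -> nat) : Prop :=
  1 <= M /\ (forall t k, k <= M -> 1 <= P t k <= N) /\
  (forall t k, k < M -> A (P t k) (P t (S k)) = 1) /\
  (P 0 0 = 1 /\ P 0 M = 1 /\ P 1 0 = 1 /\ P 1 M = 2 /\ P 2 0 = 2 /\ P 2 M = 1).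

Lemma bridges_exist N A (HN : 2 <= N) (H01 : zero_one N A) (Hap : aperiodic N A) :
  exists M P, bridges N A M P.
Proof.
  destruct Hap as [M [HM Hpos]].
  destruct (admissible_word N A H01 M 1 1 ltac:(lia) ltac:(lia) (Hpos 1 1 ltac:(lia) ltac:(lia)))
    as [W11 [a0 [aM [aA aR]]]].
  destruct (admissible_word N A H01 M 1 2 ltac:(lia) ltac:(lia) (Hpos 1 2 ltac:(lia) ltac:(lia)))
    as [W12 [b0 [bM [bA bR]]]].
  destruct (admissible_word N A H01 M 2 1 ltac:(lia) ltac:(lia) (Hpos 2 1 ltac:(lia) ltac:(lia)))
    as [W21 [c0 [cM [cA cR]]]].
  exists M, (fun t => match t with O => W11 | 1 => W12 | _ => W21 end).
  split; [exact HM|]. split; [intros [|[|t]] k Hk; auto|].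
  split; [intros [|[|t]] k Hk; auto|]. repeat split; assumption.
Qed.

Lemma divmod_unique (n M q c : nat) : c < M -> n = M * q + c -> n / M = q /\ n mod M = c.
Proof. intros Hc Hn. split; symmetry; [eapply Nat.div_unique | eapply Nat.mod_unique]; eassumption. Qed.

End Bridges.

Section PeriodicPoints.
Variables (N : nat) (A : nat -> nat -> nat) (M : nat) (P : nat -> nat -> nat).
Hypothesis Hbr : bridges N A M P.
Local Open Scope nat_scope.

Lemma M_pos : 1 <= M.
Proof. apply Hbr. Qed.

Definition block_word (typ : nat -> nat) (n : nat) : nat := P (typ (n / M)) (n mod M).

Lemma block_word_admissible typ : (forall b, P (typ b) M = P (typ (S b)) O) -> inSigma N A (block_word typ).
Proof.
  pose proof M_pos; pose proof Hbr as (_ & Hr & Ha & _). intros Hc. unfold block_word. split; intros n.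
  - apply Hr. pose proof (Nat.mod_upper_bound n M ltac:(lia)). lia.
  - pose proof (Nat.div_mod n M ltac:(lia)) as Hd. pose proof (Nat.mod_upper_bound n M ltac:(lia)) as Hu.
    destruct (Nat.ltb_spec (S (n mod M)) M).
    + destruct (divmod_unique (S n) M (n / M) (S (n mod M))) as [Eq Er]; [lia..|]. rewrite Eq, Er. apply Ha; lia.
    + destruct (divmod_unique (S n) M (S (n / M)) O) as [Eq Er]; [lia..|]. rewrite Eq, Er. rewrite <- Hc.
      pose proof (Ha (typ (n / M)) (n mod M) Hu) as X. replace (S (n mod M)) with M in X by lia. exact X.
Qed.

(* a T-periodic sequence of block types: block b goes 1 -> 2 if b = s (mod T),
   2 -> 1 if b = s+1 (mod T), and 1 -> 1 otherwise *)
Definition pattern (T s b : nat) : nat :=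
  if Nat.eqb (b mod T) s then 1 else if Nat.eqb (b mod T) (S s) then 2 else 0.

Lemma pattern_chain T s : T <> 0 -> (S s < T \/ T <= s) ->
  forall b, P (pattern T s b) M = P (pattern T s (S b)) 0.
Proof.
  pose proof M_pos; pose proof Hbr as (_ & _ & _ & e1 & e2 & e3 & e4 & e5 & e6). intros HT Hs b. unfold pattern.
  pose proof (Nat.div_mod b T HT). pose proof (Nat.mod_upper_bound b T HT).
  destruct (Nat.ltb_spec (S (b mod T)) T).
  - destruct (divmod_unique (S b) T (b / T) (S (b mod T))) as [_ Er]; [lia..|]. rewrite Er.
    destruct (Nat.eqb_spec (b mod T) s), (Nat.eqb_spec (b mod T) (S s)),
      (Nat.eqb_spec (S (b mod T)) s), (Nat.eqb_spec (S (b mod T)) (S s)); congruence || lia.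
  - destruct (divmod_unique (S b) T (S (b / T)) O) as [_ Er]; [lia..|]. rewrite Er.
    destruct (Nat.eqb_spec (b mod T) s), (Nat.eqb_spec (b mod T) (S s)),
      (Nat.eqb_spec O s), (Nat.eqb_spec O (S s)); congruence || lia.
Qed.

Lemma block_word_periodic T s n : T <> 0 ->
  block_word (pattern T s) (n + T * M) = block_word (pattern T s) n.
Proof.
  intros HT. unfold block_word, pattern. pose proof M_pos.
  pose proof (Nat.div_mod n M ltac:(lia)). pose proof (Nat.mod_upper_bound n M ltac:(lia)).
  destruct (divmod_unique (n + T * M) M (n / M + T) (n mod M)) as [Eq Er]; [lia..|]. rewrite Eq, Er.
  replace (n / M + T) with (n / M + 1 * T) by lia. now rewrite Nat.Div0.mod_add.
Qed.

Variable m : nat.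

(* number of blocks in one period of the two basic periodic points *)
Let K := m + 2.

(* uword repeats the loop 1 -> 1; vword detours through 2 in blocks m, m+1 of every K;
   uvword has period 2K: K loops, m more loops, then the detour *)
Definition uword := block_word (pattern K K).
Definition vword := block_word (pattern K m).
Definition uvword := block_word (pattern (2 * K) (K + m)).

Lemma uvword_prefix n : n < (K + m) * M -> uvword n = uword n.
Proof.
  intros Hn. pose proof M_pos. unfold uvword, uword, block_word, pattern.
  pose proof (Nat.div_mod n M ltac:(lia)). pose proof (Nat.mod_upper_bound n M ltac:(lia)).
  assert (Hq : n / M < K + m) by nia. f_equal.
  rewrite (Nat.mod_small (n / M) (2 * K)) by (unfold K in *; lia).
  pose proof (Nat.mod_upper_bound (n / M) K ltac:(unfold K; lia)).
  destruct (Nat.eqb_spec (n / M) (K + m)), (Nat.eqb_spec (n / M) (S (K + m))),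
    (Nat.eqb_spec (n / M mod K) K), (Nat.eqb_spec (n / M mod K) (S K)); lia.
Qed.

Lemma uvword_suffix n : n < (K + m) * M -> uvword (K * M + n) = vword n.
Proof.
  intros Hn. pose proof M_pos. unfold uvword, vword, block_word, pattern.
  pose proof (Nat.div_mod n M ltac:(lia)). pose proof (Nat.mod_upper_bound n M ltac:(lia)).
  set (q := n / M) in *. set (c := n mod M) in *.
  assert (Hq : q < K + m) by nia.
  destruct (divmod_unique (K * M + n) M (K + q) c) as [Eq Er]; [lia..|]. rewrite Eq, Er. f_equal.
  destruct (Nat.ltb_spec q K).
  - rewrite (Nat.mod_small q K), (Nat.mod_small (K + q) (2 * K)) by lia.
    destruct (Nat.eqb_spec (K + q) (K + m)), (Nat.eqb_spec (K + q) (S (K + m))),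
      (Nat.eqb_spec q m), (Nat.eqb_spec q (S m)); lia.
  - destruct (divmod_unique q K 1 (q - K)) as [_ E1]; [unfold K in *; lia..|].
    destruct (divmod_unique (K + q) (2 * K) 1 (q - K)) as [_ E2]; [unfold K in *; lia..|].
    rewrite E1, E2.
    destruct (Nat.eqb_spec (q - K) (K + m)), (Nat.eqb_spec (q - K) (S (K + m))),
      (Nat.eqb_spec (q - K) m), (Nat.eqb_spec (q - K) (S m)); unfold K in *; lia.
Qed.

(* uvword sees a 1 and, exactly K*M later, a 2: it is not K*M-periodic *)
Lemma uvword_marks : uvword (S m * M) = 1 /\ uvword (S m * M + K * M) = 2.
Proof.
  pose proof M_pos. pose proof Hbr as (_ & _ & _ & e1 & _ & _ & _ & e5 & _).
  unfold uvword, block_word, pattern. split.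
  - destruct (divmod_unique (S m * M) M (S m) 0) as [Eq Er]; [lia..|]. rewrite Eq, Er.
    rewrite Nat.mod_small by (unfold K; lia).
    destruct (Nat.eqb_spec (S m) (K + m)), (Nat.eqb_spec (S m) (S (K + m))); unfold K in *; lia.
  - destruct (divmod_unique (S m * M + K * M) M (S (K + m)) 0) as [Eq Er]; [lia..|]. rewrite Eq, Er.
    rewrite Nat.mod_small by (unfold K; lia). rewrite Nat.eqb_refl.
    destruct (Nat.eqb_spec (S (K + m)) (K + m)); [lia | exact e5].
Qed.

Local Open Scope R_scope.

Lemma uword_admissible : inSigma N A uword.
Proof. apply block_word_admissible, pattern_chain; unfold K; lia. Qed.
Lemma vword_admissible : inSigma N A vword.
Proof. apply block_word_admissible, pattern_chain; unfold K; lia. Qed.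
Lemma uvword_admissible : inSigma N A uvword.
Proof. apply block_word_admissible, pattern_chain; unfold K; lia. Qed.

Definition xU : Sigma N A := exist _ _ uword_admissible.
Definition xV : Sigma N A := exist _ _ vword_admissible.
Definition xUV : Sigma N A := exist _ _ uvword_admissible.

Definition period : nat := (K * M)%nat.

Lemma xU_periodic : shiftn period xU = xU.
Proof.
  apply Sigma_ext; intros n. rewrite shiftn_val. change (uword (period + n) = uword n).
  unfold period. rewrite Nat.add_comm. apply block_word_periodic; unfold K; lia.
Qed.

Lemma xV_periodic : shiftn period xV = xV.
Proof.
  apply Sigma_ext; intros n. rewrite shiftn_val. change (vword (period + n) = vword n).
  unfold period. rewrite Nat.add_comm. apply block_word_periodic; unfold K; lia.
Qed.

Lemma xUV_periodic : shiftn (2 * period) xUV = xUV.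
Proof.
  apply Sigma_ext; intros n. rewrite shiftn_val. change (uvword (2 * period + n) = uvword n).
  unfold period. replace (2 * (K * M) + n)%nat with (n + 2 * K * M)%nat by lia.
  apply block_word_periodic; unfold K; lia.
Qed.

Definition Lfun (f : Sigma N A -> R) : R :=
  birkhoff f (2 * period) xUV - birkhoff f period xU - birkhoff f period xV.

Lemma Lfun_affine f g h t : (forall w, h w = f w + t * g w) -> Lfun h = Lfun f + t * Lfun g.
Proof. intros E. unfold Lfun. rewrite !(birkhoff_affine f g h t) by exact E. ring. Qed.

Lemma Lfun_bound f e : (forall w, Rabs (f w) <= e) -> Rabs (Lfun f) <= 4 * INR period * e.
Proof.
  intros Hf. unfold Lfun.
  pose proof (birkhoff_bound f e (2 * period) xUV Hf) as B1.
  pose proof (birkhoff_bound f e period xU Hf) as B2.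
  pose proof (birkhoff_bound f e period xV Hf) as B3.
  rewrite mult_INR in B1; simpl (INR 2) in B1.
  apply Rabs_le_between in B1, B2, B3. apply Rabs_le_between. lra.
Qed.

(* L_m kills m-local functions: xUV copies xU, then xV, on long enough windows *)
Lemma Lfun_local_zero f : local m f -> Lfun f = 0.
Proof.
  intros Hf. pose proof M_pos. unfold Lfun.
  replace (2 * period)%nat with (period + period)%nat by lia. rewrite birkhoff_add.
  rewrite (birkhoff_local f m period xUV xU Hf), (birkhoff_local f m period (shiftn period xUV) xV Hf); [lra| |].
  - intros k Hk. rewrite shiftn_val. change (uvword (period + k) = vword k).
    apply uvword_suffix. unfold period, K in *; nia.
  - intros k Hk. change (uvword k = uword k).
    apply uvword_prefix. unfold period, K in *; nia.
Qed.

(* L_m is invariant under adding coboundaries, since xU, xV, xUV are periodic *)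
Lemma Lfun_cohomologous f g h : (forall w, f w - g w = h (shift w) - h w) -> Lfun f = Lfun g.
Proof.
  intros Hfgh. unfold Lfun.
  rewrite (birkhoff_cohomologous f g h _ xUV Hfgh xUV_periodic),
    (birkhoff_cohomologous f g h _ xU Hfgh xU_periodic), (birkhoff_cohomologous f g h _ xV Hfgh xV_periodic).
  reflexivity.
Qed.

Lemma Lfun_cohomologous_zero (phi vphi psi : Sigma N A -> C) : Defs.var vphi m = Finite 0 ->
  (forall w, Cminus (phi w) (vphi w) = Cminus (psi (shift w)) (psi w)) -> Lfun (fun w => Re (phi w)) = 0.
Proof.
  intros Hv Hcob.
  rewrite (Lfun_cohomologous _ (fun w => Re (vphi w)) (fun w => Re (psi w))).
  - apply Lfun_local_zero, (var_zero_local vphi m Hv).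
  - intros w. exact (f_equal Re (Hcob w)).
Qed.

Definition bump : Sigma N A -> R := cyl_ind (2 * period) xUV.

(* no period-periodic orbit meets that cylinder, because xUV is not period-periodic *)
Lemma bump_off_periodic x : shiftn period x = x -> forall j, bump (shiftn j x) = 0.
Proof.
  intros Hx j. unfold bump, cyl_ind. destruct agree_dec as [Ha|]; [exfalso|reflexivity].
  pose proof M_pos. destruct uvword_marks as [E1 E2].
  pose proof (Ha (S m * M)%nat ltac:(unfold period, K; nia)) as H1.
  pose proof (Ha (S m * M + K * M)%nat ltac:(unfold period, K; nia)) as H2.
  rewrite shiftn_val in H1, H2. change (proj1_sig xUV) with uvword in H1, H2.
  replace (j + (S m * M + K * M))%nat with (period + (j + S m * M))%nat in H2 by (unfold period; lia).
  rewrite <- shiftn_val, Hx in H2. unfold K in *. congruence.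
Qed.

Lemma Lfun_bump : 1 <= Lfun bump.
Proof.
  pose proof M_pos. unfold Lfun.
  rewrite (birkhoff_orbit_zero bump period xU), (birkhoff_orbit_zero bump period xV)
    by (apply bump_off_periodic; first [exact xU_periodic | exact xV_periodic]).
  (* the first term of S_(2p) bump (xUV) is bump xUV = 1, the others are nonnegative *)
  destruct (2 * period)%nat as [|p] eqn:Ep; [unfold period, K in Ep; nia|]. simpl birkhoff.
  pose proof (birkhoff_nonneg bump p (shift xUV) (fun w => proj1 (cyl_ind_bounds _ _ w))).
  unfold bump at 1. rewrite cyl_ind_center. lra.
Qed.

Lemma separated_pair : exists (w w' : Sigma N A) n, agree n w w' /\ proj1_sig w n <> proj1_sig w' n.
Proof.
  destruct uvword_marks as [E1 E2].
  exists xUV, (shiftn period xUV). apply (first_difference _ _ (S (S m * M))).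
  intros Ha. specialize (Ha (S m * M)%nat ltac:(lia)). rewrite shiftn_val in Ha.
  change (proj1_sig xUV) with uvword in Ha. unfold period in Ha.
  rewrite Nat.add_comm in Ha. congruence.
Qed.

Definition Vset (phi : Sigma N A -> C) : Prop := inV phi /\ Lfun (fun w => Re (phi w)) <> 0.

(* V_m is open: L_m is continuous for the sup norm, which the theta-norms dominate *)
Lemma Vset_open : openV Vset.
Proof.
  split; [intros phi [Hv _]; exact Hv|]. intros phi [Hv HL].
  set (L := Lfun (fun w => Re (phi w))) in *.
  assert (HLpos : 0 < Rabs L) by (apply Rabs_pos_lt, HL).
  pose proof (pos_INR period) as Hper.
  set (e := Rabs L / (4 * INR period + 1)).
  assert (He : 0 < e) by (apply Rdiv_lt_0_compat; lra).
  exists (/2 :: nil), e. split; [intros th [<-|[]]; lra|]. split; [exact He|].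
  (* on this neighbourhood |Re psi - Re phi| < e, so |L_m psi - L_m phi| <= 4 p e < |L_m phi| *)
  intros psi [Hpsi Hn]. split; [exact Hpsi|].
  assert (Hclose : forall w, Rabs (Re (psi w) - Re (phi w)) <= e).
  { intros w. left. eapply Rle_lt_trans; [apply (re_le_Cmod (Cminus (psi w) (phi w)))|].
    exact (sup_lt_of_normth_lt (/2) e _ ltac:(lra) separated_pair (Hn (/2) (or_introl eq_refl)) w). }
  assert (Hdiff : Lfun (fun w => Re (psi w)) = L + Lfun (fun w => Re (psi w) - Re (phi w))).
  { unfold L. rewrite (Lfun_affine (fun w => Re (phi w)) (fun w => Re (psi w) - Re (phi w)) (fun w => Re (psi w)) 1)
      by (intros w; ring). ring. }
  pose proof (Lfun_bound _ _ Hclose) as Hb.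
  assert (Hsmall : 4 * INR period * e < Rabs L)
    by (unfold e; apply (Rmult_lt_reg_r (4 * INR period + 1)); [lra | field_simplify; lra]).
  intros Hz. rewrite Hz in Hdiff.
  replace (Lfun (fun w => Re (psi w) - Re (phi w))) with (- L) in Hb by lra.
  rewrite Rabs_Ropp in Hb. lra.
Qed.

(* V_m is dense: perturb phi by t * bump, t small, avoiding the one bad value of t *)
Lemma Vset_dense : denseV Vset.
Proof.
  intros phi Hphi s eps Hs He.
  destruct (uniform_small_scale s (2 * period) eps Hs He) as [t0 [Ht0 Hsmall]].
  set (perturb t := fun w => Cplus (phi w) (RtoC (t * bump w))).
  assert (Hnbhd : forall t, 0 < t <= t0 -> in_nbhd s eps phi (perturb t)).
  { intros t Ht. apply (perturb_in_nbhd s eps (2 * period)); [exact Hs | exact Hphi | apply cyl_ind_local | | lra |].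
    - intros w. apply cyl_ind_bounds.
    - intros th Hth. apply Hsmall; [exact Hth | exact Ht]. }
  assert (HL : forall t, Lfun (fun w => Re (perturb t w)) = Lfun (fun w => Re (phi w)) + t * Lfun bump)
    by (intros t; apply Lfun_affine; intros w; reflexivity).
  (* one of t0, t0/2 avoids the root of the affine map t |-> L(phi) + t L(bump) *)
  assert (Hroot : exists t, 0 < t <= t0 /\ Lfun (fun w => Re (phi w)) + t * Lfun bump <> 0).
  { pose proof Lfun_bump.
    destruct (Req_dec (Lfun (fun w => Re (phi w)) + t0 * Lfun bump) 0); [exists (t0 / 2) | exists t0];
      split; [lra | nra | lra | assumption]. }
  destruct Hroot as [t [Ht HLt]]. exists (perturb t).
  split; [exact (Hnbhd t Ht) |]. split; [exact (proj1 (Hnbhd t Ht)) |]. rewrite HL. exact HLt.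
Qed.

End PeriodicPoints.

Theorem theoremB2 (N : nat) (A : nat -> nat -> nat)
  (HN : (2 <= N)%nat) (H01 : zero_one N A) (Hap : aperiodic N A) :
  exists Vm : nat -> (Sigma N A -> C) -> Prop,
    (forall m, openV (Vm m) /\ denseV (Vm m)) /\
    (forall phi, (forall m, Vm m phi) -> Rresid phi).
Proof.
  destruct (bridges_exist N A HN H01 Hap) as [M [P Hbr]].
  exists (Vset N A M P Hbr). split.
  - intros m. split; [apply Vset_open | apply Vset_dense].
  - intros phi Hall. split; [exact (proj1 (Hall O)) |].
    intros [vphi [psi [[m Hm] [_ Hcob]]]].
    apply (proj2 (Hall m)). exact (Lfun_cohomologous_zero N A M P Hbr m phi vphi psi Hm Hcob).
Qed.
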